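(* Let $G$ be a graph with $m\ge1$ edges, let $k\ge1$ and $0\le p\le m$ be integers, $\ell=m-p$, and $\eta=k(\ell+2)$. Let $E$ be the classification instance $E(G,\eta)$ described in the context. Then $G$ has a set $U\subseteq V(G)$ with $|U|\le k$ that is incident to at least $p$ edges if and only if there is a decision tree $T$ with $|T|\le k$ and $|O(T,E)|\le \ell\eta$.
   Context: Fix an ordering $e_1,\dots,e_m$ of $E(G)$. For a positive integer $\eta$, $E(G,\eta)$ has features $V(G)\cup\{d_0\}$ (one ''vertex feature'' per vertex, plus $d_0$) and, for each $r\in[\eta]$ and $i\in[m]$: a negative example with $d_0=2m(r-1)+2i-1$ and, for each $v\in V(G)$, value $1$ if $v$ is an endpoint of $e_i$ and $0$ otherwise; and a positive example with $d_0=2m(r-1)+2i$ and value $0$ on every vertex feature. A decision tree (DT) is a rooted tree whose test nodes $v$ carry a feature $f(v)$ and integer threshold $\lambda(v)$ (examples with $e(f(v))\le\lambda(v)$ go left, others right) and whose leaves are labeled positive or negative. $|T|$ is the number of test nodes. An example is an outlier for $T$ if it reaches a leaf with the opposite label; $O(T,E)$ is the set of outliers. *)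

From mathcomp Require Import all_boot all_order all_algebra.
Set Implicit Arguments. Unset Strict Implicit. Unset Printing Implicit Defensive.
Import Order.TTheory GRing.Theory Num.Theory.

(* A simple graph on the finite vertex type V together with a fixed ordering
   e_1,...,e_m of its edges is given by the sequence es of endpoint pairs:
   no loops, and each unordered edge occurs exactly once. *)
Definition simple_edge_list (V : finType) (es : seq (V * V)) : Prop :=
  [/\ all (fun e => e.1 != e.2) es, uniq es &
      forall e, e \in es -> (e.2, e.1) \notin es].

(* Features: Some v is the vertex feature of v, None is d_0. *)
Definition feature (V : finType) := option V.

(* An example: a value for every feature, and a label (true = positive). *)
Definition example (V : finType) : Type := ((feature V -> int) * bool)%type.

Inductive DT (V : finType) : Type :=
| Leaf : bool -> DT V
| Node : feature V -> int -> DT V -> DT V -> DT V.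

Fixpoint dt_size (V : finType) (T : DT V) : nat :=
  match T with
  | Leaf _ => 0
  | Node _ _ l r => (dt_size l + dt_size r).+1
  end.

Fixpoint classify (V : finType) (T : DT V) (x : feature V -> int) : bool :=
  match T with
  | Leaf b => b
  | Node f t l r => if (x f <= t)%R then classify l x else classify r x
  end.

Definition outliers (V : finType) (T : DT V) (E : seq (example V)) :=
  [seq x <- E | classify T x.1 != x.2].

(* The two examples for r in [eta] and i in [m] (0-indexed: r0 = r-1,
   i0 = i-1), edge e = e_i. *)
Definition neg_ex (V : finType) (m r0 i0 : nat) (e : V * V) : example V :=
  (fun f => match f with
            | None => Posz (2 * m * r0 + 2 * i0 + 1)
            | Some v => Posz (nat_of_bool ((v == e.1) || (v == e.2)))
            end, false).

Definition pos_ex (V : finType) (m r0 i0 : nat) (e : V * V) : example V :=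
  (fun f => match f with
            | None => Posz (2 * m * r0 + 2 * i0 + 2)
            | Some v => Posz 0
            end, true).

Definition instance (V : finType) (es : seq (V * V)) (eta : nat)
  : seq (example V) :=
  flatten [seq [:: neg_ex (size es) r0 ie.1 ie.2; pos_ex (size es) r0 ie.1 ie.2]
          | r0 <- iota 0 eta, ie <- zip (iota 0 (size es)) es].

Definition incident (V : finType) (U : {set V}) (e : V * V) : bool :=
  (e.1 \in U) || (e.2 \in U).

From mathcomp Require Import all_boot all_order all_algebra.
From mathcomp Require Import zify.
Set Implicit Arguments. Unset Strict Implicit. Unset Printing Implicit Defensive.
Import Order.TTheory GRing.Theory Num.Theory.

(* The instance consists of eta blocks, block r listing the example pairs of
   all m edges with d_0 in [2mr+1, 2mr+2m].  A cover U gives the tree testing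
   the vertices of U one after the other; its outliers are the negative
   examples of the uncovered edges, at most l per block when U covers at
   least p edges.
   Conversely, a tree T with at most k tests has at most k thresholds on d_0,
   and each of them separates the two examples of a pair in at most one
   block.  In every other block, the two examples of an edge that avoids the
   vertices tested in T reach the same leaf, so one of them is an outlier.
   If those vertices covered fewer than p edges, this would give at least
   (eta - k)(l + 1) = k (l + 1)^2 > l eta outliers. *)

Lemma count_mul_le_sum (I : Type) (s : seq I) (P : pred I) (F : I -> nat) c :
  (forall i, P i -> c <= F i) -> count P s * c <= \sum_(i <- s) F i.
Proof.
move=> leF; elim: s => [|i s IHs]; rewrite ?big_nil ?big_cons //= mulnDl.
by rewrite leq_add //; case: (boolP (P i)) => Pi; rewrite ?mul1n ?mul0n ?leF.
Qed.

Lemma sum_zip2_count (I T : Type) (s : seq I) (t : seq T) (a : pred T) :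
  size t <= size s -> \sum_(x <- zip s t) a x.2 = count a t.
Proof.
move=> le_ts; rewrite -(big_map snd xpredT (fun y => nat_of_bool (a y))).
by rewrite -[map snd _]/(unzip2 _) unzip2_zip // -sumn_count sumnE big_map.
Qed.

Lemma count_mem_le_size (T : eqType) (s t : seq T) :
  uniq s -> count (mem t) s <= size t.
Proof.
move=> uniq_s; rewrite -size_filter uniq_leq_size ?filter_uniq //.
by move=> x; rewrite mem_filter => /andP[].
Qed.

Section DecisionTrees.
Variable V : finType.

Fixpoint vertex_tests (T : DT V) : seq V :=
  match T with
  | Leaf _ => [::]
  | Node (Some v) _ l r => v :: vertex_tests l ++ vertex_tests r
  | Node None _ l r => vertex_tests l ++ vertex_tests r
  end.

Fixpoint d0_thresholds (T : DT V) : seq int :=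
  match T with
  | Leaf _ => [::]
  | Node (Some _) _ l r => d0_thresholds l ++ d0_thresholds r
  | Node None t l r => t :: d0_thresholds l ++ d0_thresholds r
  end.

Lemma size_tests (T : DT V) :
  size (vertex_tests T) + size (d0_thresholds T) = dt_size T.
Proof. by elim: T => [b|[v|] t l IHl r IHr] //=; rewrite !size_cat /=; lia. Qed.

Lemma classify_eq_on_tests (T : DT V) (x y : feature V -> int) :
  {in vertex_tests T, forall v, x (Some v) = y (Some v)} ->
  {in d0_thresholds T, forall t, (x None <= t)%R = (y None <= t)%R} ->
  classify T x = classify T y.
Proof.
elim: T => [b|[v|] t l IHl r IHr] //= eq_v eq_t;
  rewrite ?eq_v ?eq_t ?mem_head // IHl ?IHr // => z z_in;
  first [apply: eq_v | apply: eq_t]; by rewrite !(inE, mem_cat) z_in ?orbT.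
Qed.

Fixpoint vertex_chain (s : seq V) : DT V :=
  match s with
  | [::] => Leaf V true
  | v :: s' => Node (Some v) 0%R (vertex_chain s') (Leaf V false)
  end.

Lemma size_vertex_chain (s : seq V) : dt_size (vertex_chain s) = size s.
Proof. by elim: s => //= v s ->; rewrite addn0. Qed.

Lemma classify_vertex_chain (s : seq V) (x : feature V -> int) :
  classify (vertex_chain s) x = all (fun v => x (Some v) <= 0)%R s.
Proof. by elim: s => //= v s ->; case: ifP. Qed.

Definition misclassified (T : DT V) (x : example V) := classify T x.1 != x.2.

Definition pair_outliers (T : DT V) (m r0 i0 : nat) (e : V * V) :=
  count (misclassified T) [:: neg_ex m r0 i0 e; pos_ex m r0 i0 e].

Lemma size_outliers_instance (T : DT V) (es : seq (V * V)) (eta : nat) :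
  size (outliers T (instance es eta)) =
  \sum_(0 <= r0 < eta) \sum_(ie <- zip (iota 0 (size es)) es)
     pair_outliers T (size es) r0 ie.1 ie.2.
Proof.
rewrite size_filter /instance /index_iota subn0.
elim: (iota 0 eta) => [|r s IHs]; first by rewrite big_nil.
by rewrite big_cons /= flatten_cat count_cat IHs count_flatten sumnE !big_map.
Qed.

Lemma pair_outliers_same_leaf (T : DT V) m r0 i0 e :
  classify T (neg_ex m r0 i0 e).1 = classify T (pos_ex m r0 i0 e).1 ->
  pair_outliers T m r0 i0 e = 1.
Proof. by rewrite /pair_outliers /misclassified /= => ->; case: classify. Qed.

Lemma pair_outliers_chain (U : {set V}) m r0 i0 e :
  pair_outliers (vertex_chain (enum U)) m r0 i0 e = ~~ incident U e.
Proof.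
rewrite /pair_outliers /misclassified /= !classify_vertex_chain.
have -> : all (fun v : V => (Posz 0 <= 0)%R) (enum U) by apply/allP.
have le0E (b : bool) : (Posz b <= 0)%R = ~~ b by case: b.
rewrite (eq_all (fun v => le0E _)) all_predC has_predU !has_pred1 !mem_enum.
by rewrite /incident; case: (_ || _).
Qed.

Lemma outliers_vertex_chain (U : {set V}) (es : seq (V * V)) (eta : nat) :
  size (outliers (vertex_chain (enum U)) (instance es eta)) =
  eta * count (predC (incident U)) es.
Proof.
rewrite size_outliers_instance.
have block_sum r0 : \sum_(ie <- zip (iota 0 (size es)) es)
    pair_outliers (vertex_chain (enum U)) (size es) r0 ie.1 ie.2 =
    count (predC (incident U)) es.
  rewrite -(sum_zip2_count (s := iota 0 (size es))) ?size_iota //.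
  by apply: eq_bigr => ie _; rewrite pair_outliers_chain.
rewrite (eq_bigr _ (fun r0 _ => block_sum r0)).
by rewrite sum_nat_const_nat subn0.
Qed.

(* A threshold t separates the d_0 values t and t + 1 of a pair and no
   others, so block r0 is cut by D exactly when D meets the odd values
   2 m r0 + 2 i0 + 1 of the block. *)
Definition cut_block (D : seq int) (m r0 : nat) :=
  has (fun i0 => Posz (2 * m * r0 + 2 * i0 + 1) \in D) (iota 0 m).

Lemma count_cut_blocks (D : seq int) (m eta : nat) :
  count (cut_block D m) (iota 0 eta) <= size D.
Proof.
pose block_of (t : int) := (`|t|%N).-1 %/ (2 * m).
have cut_block_of r0 : cut_block D m r0 -> r0 \in map block_of D.
  case/hasP=> i0; rewrite mem_iota add0n => lt_i0m t_in.
  apply/mapP; exists (Posz (2 * m * r0 + 2 * i0 + 1)) => //.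
  rewrite /block_of /= addn1 /= [2 * m * r0]mulnC.
  by rewrite divnMDl ?divn_small ?addn0 //; lia.
rewrite -(size_map block_of); apply: leq_trans (count_mem_le_size _ (iota_uniq _ _)).
exact: sub_count.
Qed.

Lemma pair_outliers_uncut (T : DT V) m r0 i0 e :
  Posz (2 * m * r0 + 2 * i0 + 1) \notin d0_thresholds T ->
  ~~ incident [set v in vertex_tests T] e ->
  pair_outliers T m r0 i0 e = 1.
Proof.
rewrite /incident !inE negb_or => t_notin /andP[e1_notin e2_notin].
apply/pair_outliers_same_leaf/classify_eq_on_tests => [v v_in | t t_in] /=.
- have /negPf-> : v != e.1 by apply: contraNneq e1_notin => <-.
  by have /negPf-> : v != e.2 by apply: contraNneq e2_notin => <-.
- have t_neq : t != Posz (2 * m * r0 + 2 * i0 + 1).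
    by apply: contraNneq t_notin => <-.
  by move: t_neq; lia.
Qed.

Lemma block_outliers_uncut (T : DT V) (es : seq (V * V)) r0 :
  ~~ cut_block (d0_thresholds T) (size es) r0 ->
  count (predC (incident [set v in vertex_tests T])) es <=
  \sum_(ie <- zip (iota 0 (size es)) es) pair_outliers T (size es) r0 ie.1 ie.2.
Proof.
move=> uncut; rewrite -(sum_zip2_count (s := iota 0 (size es))) ?size_iota //.
rewrite big_seq [X in _ <= X]big_seq.
apply: leq_sum => -[i0 e] ie_in /=; case: (boolP (incident _ e)) => //= e_out.
rewrite pair_outliers_uncut //; apply: contra uncut => t_in; apply/hasP.
exists i0 => //; move: (map_f fst ie_in).
by rewrite -[map fst _]/(unzip1 _) unzip1_zip ?size_iota.
Qed.

Lemma outliers_lower_bound (T : DT V) (es : seq (V * V)) (eta : nat) :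
  (eta - dt_size T) * count (predC (incident [set v in vertex_tests T])) es <=
  size (outliers T (instance es eta)).
Proof.
set cut := cut_block (d0_thresholds T) (size es).
have uncut_blocks : eta - dt_size T <= count (predC cut) (iota 0 eta).
  have := count_cut_blocks (d0_thresholds T) (size es) eta; have := size_tests T.
  have := count_predC cut (iota 0 eta); rewrite size_iota -/cut; lia.
rewrite size_outliers_instance /index_iota subn0.
apply: leq_trans (count_mul_le_sum _ (block_outliers_uncut (T := T) (es := es))).
by rewrite leq_mul2r uncut_blocks orbT.
Qed.

End DecisionTrees.

Theorem lemma4 (V : finType) (es : seq (V * V)) (k p : nat) :
  simple_edge_list es ->
  1 <= size es -> 1 <= k -> p <= size es ->
  let m := size es in
  let l := m - p in
  let eta := k * (l + 2) in
  (exists U : {set V}, #|U| <= k /\ p <= count (incident U) es) <->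
  (exists T : DT V, dt_size T <= k /\
     size (outliers T (instance es eta)) <= l * eta).
Proof.
move=> _ _ k_gt0 le_pm m l eta.
have count_uncovered U : count (predC (incident U)) es = m - count (incident U) es.
  by rewrite /m -(count_predC (incident U) es) addKn.
split=> [[U [card_U cover_U]] | [T [size_T few_outliers]]].
  exists (vertex_chain (enum U)); rewrite size_vertex_chain -cardE card_U.
  by rewrite outliers_vertex_chain count_uncovered mulnC leq_mul2r leq_sub2l ?orbT.
exists [set v in vertex_tests T]; split.
  rewrite cardsE (leq_trans (card_size _)) //.
  by have := size_tests T; lia.
rewrite leqNgt; apply/negP => few_covered.
have uncovered : l.+1 <= count (predC (incident [set v in vertex_tests T])) es.
  by rewrite count_uncovered /l; lia.
have : k * l.+1 * l.+1 <= l * eta.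
  apply: leq_trans few_outliers; apply: leq_trans (outliers_lower_bound T es eta).
  by rewrite leq_mul // /eta; lia.
by rewrite /eta; nia.
Qed.
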